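(* Let $(X,\tau)$ be a metrizable topological space, let $W\subseteq X$ be such that $\operatorname{den}(W)$ is a cardinal of uncountable cofinality, and let $D$ be a finite family of metrics on $X$ each of which induces the topology $\tau$. Then there exists $\varepsilon_0>0$ such that for every $\varepsilon\in\,]0,\varepsilon_0[$ the values $\hat{\mathcal N}_\varepsilon(W)$, $\hat{\mathcal N}^X_\varepsilon(W)$, $\hat{\mathcal M}_\varepsilon(W)$ and $\mathcal M^*_\varepsilon(W)$, computed with respect to $d\in D$, do not depend on the choice of $d\in D$.
   Context: $\operatorname{den}(W)$ is the minimal cardinality of a dense subset of $W$ (a topological quantity). Cofinality of a cardinal $\beta$: least ordinal $\alpha$ admitting a strictly increasing cofinal map $\alpha\to\beta$. For a metric $d$: $B(c,r)=\{x:d(x,c)\le r\}$; $C$ is an $\varepsilon$-net for $W$ if $W\subseteq\bigcup_{c\in C}B(c,\varepsilon)$; $A$ is $\varepsilon$-distinguishable if $d(x,y)>\varepsilon$ for distinct $x,y\in A$. $\hat{\mathcal N}^A_\varepsilon(W)$ is the minimal cardinality of an $\varepsilon$-net $C\subseteq A$ for $W$; $\hat{\mathcal N}_\varepsilon(W):=\hat{\mathcal N}^W_\varepsilon(W)$; $\hat{\mathcal M}_\varepsilon(W)$ is the smallest cardinality of an $\varepsilon$-distinguishable $A\subseteq W$ that is maximal under inclusion among $\varepsilon$-distinguishable subsets of $W$; $\mathcal M^*_\varepsilon(W)$ is the smallest cardinal $\ge\operatorname{card}(A)$ for every $\varepsilon$-distinguishable $A\subseteq W$. *)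

(* classical reals. Cardinals are represented by (sub)types,
   compared via injections / bijections. *)
From Stdlib Require Import Reals List.
Open Scope R_scope.

Definition card_le (A B : Type) : Prop :=
  exists f : A -> B, forall a1 a2, f a1 = f a2 -> a1 = a2.
Definition card_eq (A B : Type) : Prop :=
  exists (f : A -> B) (g : B -> A), (forall a, g (f a) = a) /\ (forall b, f (g b) = b).

Definition sub {X : Type} (A : X -> Prop) : Type := { x : X | A x }.
Definition incl {X : Type} (A B : X -> Prop) : Prop := forall x, A x -> B x.

Definition min_card {X : Type} (P : (X -> Prop) -> Prop) (A : X -> Prop) : Prop :=
  P A /\ forall B, P B -> card_le (sub A) (sub B).

Definition strict_well_order {T : Type} (lt : T -> T -> Prop) : Prop :=
  (forall x, ~ lt x x) /\
  (forall x y z, lt x y -> lt y z -> lt x z) /\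
  (forall x y, lt x y \/ x = y \/ lt y x) /\
  well_founded lt.

Definition countable (A : Type) : Prop := card_le A nat.

(* lt is a well-order of T of the order type of the initial ordinal |T|
   (von Neumann cardinal): every proper initial segment has cardinality < |T| *)
Definition initial_order {T : Type} (lt : T -> T -> Prop) : Prop :=
  strict_well_order lt /\
  forall k : T, ~ card_le T { j : T | lt j k }.

(* The cardinal |T| has uncountable cofinality: no countable ordinal
   (countable well-ordered set) admits a strictly increasing cofinal map into |T|. *)
Definition uncountable_cofinality (T : Type) : Prop :=
  exists lt : T -> T -> Prop, initial_order lt /\
    forall (A : Type) (ltA : A -> A -> Prop) (f : A -> T),
      strict_well_order ltA -> countable A ->
      (forall a b, ltA a b -> lt (f a) (f b)) ->
      ~ (forall k : T, exists a, k = f a \/ lt k (f a)).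

Definition is_metric {X : Type} (d : X -> X -> R) : Prop :=
  (forall x y, 0 <= d x y) /\
  (forall x y, d x y = 0 <-> x = y) /\
  (forall x y, d x y = d y x) /\
  (forall x y z, d x z <= d x y + d y z).

(* tau : the open sets of the topology on X *)
Definition induces {X : Type} (d : X -> X -> R) (tau : (X -> Prop) -> Prop) : Prop :=
  forall U, tau U <-> (forall x, U x -> exists r, 0 < r /\ forall y, d x y < r -> U y).

Definition metrizable {X : Type} (tau : (X -> Prop) -> Prop) : Prop :=
  exists d, is_metric d /\ induces d tau.

(* S is a dense subset of W (w.r.t. the subspace topology of W) *)
Definition dense_in {X : Type} (tau : (X -> Prop) -> Prop) (W S : X -> Prop) : Prop :=
  incl S W /\
  forall U, tau U -> forall w, W w -> U w -> exists s, S s /\ U s.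

(* closed ball B(c,r) = {x | d(x,c) <= r} *)
Definition is_net {X : Type} (d : X -> X -> R) (eps : R) (W C : X -> Prop) : Prop :=
  forall w, W w -> exists c, C c /\ d w c <= eps.

Definition net_in {X : Type} (d : X -> X -> R) (eps : R) (A W : X -> Prop)
  (C : X -> Prop) : Prop := incl C A /\ is_net d eps W C.

Definition distinguishable {X : Type} (d : X -> X -> R) (eps : R) (A : X -> Prop) : Prop :=
  forall x y, A x -> A y -> x <> y -> eps < d x y.

Definition maximal_distinguishable {X : Type} (d : X -> X -> R) (eps : R)
  (W A : X -> Prop) : Prop :=
  incl A W /\ distinguishable d eps A /\
  forall B, incl B W -> distinguishable d eps B -> incl A B -> incl B A.

(* K has cardinality M^*_eps(W): the least cardinal >= card(A) for all
   eps-distinguishable A ⊆ W *)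
Definition is_Mstar {X : Type} (d : X -> X -> R) (eps : R) (W : X -> Prop) (K : Type) : Prop :=
  (forall A, incl A W -> distinguishable d eps A -> card_le (sub A) K) /\
  (forall T : Type,
     (forall A, incl A W -> distinguishable d eps A -> card_le (sub A) T) ->
     card_le K T).

(* Nhat^A_eps(W) w.r.t. d has cardinality |C| *)
Definition is_NhatA {X : Type} (d : X -> X -> R) (eps : R) (A W C : X -> Prop) : Prop :=
  min_card (net_in d eps A W) C.

(* Mhat_eps(W) w.r.t. d has cardinality |A| *)
Definition is_Mhat {X : Type} (d : X -> X -> R) (eps : R) (W A : X -> Prop) : Prop :=
  min_card (maximal_distinguishable d eps W) A.

From Pilot Require Import Defs.
From Stdlib Require Import Reals List Classical ClassicalEpsilon ProofIrrelevance
  FunctionalExtensionality Wf_nat Inverse_Image Cantor Lia Lra.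
Open Scope R_scope.

(** Let [S] be a dense subset of [W] of minimal cardinality [κ = den W], where
    [κ] has uncountable cofinality.  We show that all four capacities equal [κ].
    - For one compatible metric, some [e0 > 0] makes every [e0]-net of [W] have
      cardinality [≥ κ] ([net_lower_bound]).  Otherwise there are nets [C_n] of
      radius [1/(n+1)] with [|C_n| < κ]; replacing each centre by the least
      nearby point of [S] (in an initial well-order of [S]) yields [Y_n ⊆ S]
      with [|Y_n| ≤ |C_n|] and [⋃ Y_n] dense, yet a countable union of sets of
      size [< κ] has size [< κ] ([small_countable_union]).
    - As [D] is finite, one threshold works for all metrics ([common_threshold]).
    - Below that threshold: [S] is an [eps]-net; [eps]-distinguishable subsets of
      [W] inject into [S]; maximal ones are [eps]-nets; a greedy transfinite
      selection along [S] gives an [eps]-distinguishable [2 eps]-net.  With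
      Cantor–Schröder–Bernstein each capacity is [κ] ([capacities_card_eq]). *)

Lemma card_le_refl (A : Type) : card_le A A.
Proof. exists (fun a => a); auto. Qed.

Lemma card_le_trans (A B C : Type) : card_le A B -> card_le B C -> card_le A C.
Proof.
  intros [f Hf] [g Hg]. exists (fun a => g (f a)). intros a1 a2 H; apply Hf, Hg, H.
Qed.

Lemma card_eq_sym (A B : Type) : card_eq A B -> card_eq B A.
Proof. intros (f & g & H1 & H2). exists g, f; auto. Qed.

Lemma card_eq_trans (A B C : Type) : card_eq A B -> card_eq B C -> card_eq A C.
Proof.
  intros (f & g & H1 & H2) (f' & g' & H1' & H2').
  exists (fun a => f' (f a)), (fun c => g (g' c)). split; intros.
  - rewrite H1'. apply H1.
  - rewrite H2. apply H2'.
Qed.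

Lemma card_eq_through (A B C : Type) : card_eq A C -> card_eq B C -> card_eq A B.
Proof. intros HA HB. exact (card_eq_trans _ _ _ HA (card_eq_sym _ _ HB)). Qed.

Lemma sub_eq (A : Type) (P : A -> Prop) (a b : sig P) : proj1_sig a = proj1_sig b -> a = b.
Proof. destruct a, b; simpl; intros; subst; f_equal; apply proof_irrelevance. Qed.

Lemma dep_choice (A : Type) (C : A -> Type) (P : forall a, C a -> Prop) :
  (forall a, exists c, P a c) -> exists h : forall a, C a, forall a, P a (h a).
Proof.
  intros H. exists (fun a => proj1_sig (constructive_indefinite_description _ (H a))).
  intros a. exact (proj2_sig (constructive_indefinite_description _ (H a))).
Qed.

(** Given injections [f : A -> B] and [g : B -> A],
    the chain set [csb_chain] is the part of [A] reached from [g (B \ f A)] by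
    iterating [g ∘ f]; the bijection is [g⁻¹] on the chain and [f] off it. *)
Section SchroederBernstein.
Variables (A B : Type) (f : A -> B) (g : B -> A).
Hypothesis (Hf : forall a1 a2, f a1 = f a2 -> a1 = a2)
           (Hg : forall b1 b2, g b1 = g b2 -> b1 = b2).

Inductive csb_chain : A -> Prop :=
| chain_start : forall b, (forall a, f a <> b) -> csb_chain (g b)
| chain_step : forall a, csb_chain a -> csb_chain (g (f a)).

Lemma chain_in_range a : csb_chain a -> exists b, g b = a.
Proof. intros []; eauto. Qed.

Lemma off_chain_in_range b : ~ csb_chain (g b) -> exists a, f a = b.
Proof.
  intros H. apply NNPP; intro H'. apply H. apply chain_start.
  intros a E; apply H'; eauto.
Qed.

Lemma off_chain_step a : ~ csb_chain a -> ~ csb_chain (g (f a)).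
Proof.
  intros H H'. inversion H' as [b Hb E | a' Ha' E].
  - apply Hg in E. apply (Hb a); auto.
  - apply Hg, Hf in E. subst. auto.
Qed.

Definition csb_fwd (a : A) : B :=
  match excluded_middle_informative (csb_chain a) with
  | left H => proj1_sig (constructive_indefinite_description _ (chain_in_range a H))
  | right _ => f a
  end.

Definition csb_bwd (b : B) : A :=
  match excluded_middle_informative (csb_chain (g b)) with
  | left _ => g b
  | right H => proj1_sig (constructive_indefinite_description _ (off_chain_in_range b H))
  end.

Lemma csb_bwd_fwd a : csb_bwd (csb_fwd a) = a.
Proof.
  unfold csb_fwd. destruct (excluded_middle_informative (csb_chain a)) as [H|H].
  - destruct (constructive_indefinite_description _ _) as [b Hb]; simpl.
    unfold csb_bwd. destruct (excluded_middle_informative (csb_chain (g b))) as [H1|H1]; auto.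
    exfalso; apply H1; rewrite Hb; auto.
  - unfold csb_bwd. destruct (excluded_middle_informative (csb_chain (g (f a)))) as [H1|H1].
    + exfalso; exact (off_chain_step a H H1).
    + destruct (constructive_indefinite_description _ _) as [a' Ha']; simpl. auto.
Qed.

Lemma csb_fwd_bwd b : csb_fwd (csb_bwd b) = b.
Proof.
  unfold csb_bwd. destruct (excluded_middle_informative (csb_chain (g b))) as [H|H].
  - unfold csb_fwd.
    destruct (excluded_middle_informative (csb_chain (g b))) as [H1|H1]; [|contradiction].
    destruct (constructive_indefinite_description _ _) as [b' Hb']; simpl. auto.
  - destruct (constructive_indefinite_description _ _) as [a Ha]; simpl.
    unfold csb_fwd. destruct (excluded_middle_informative (csb_chain a)) as [H1|H1]; auto.
    exfalso. apply H. rewrite <- Ha. apply chain_step; auto.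
Qed.
End SchroederBernstein.

Lemma schroeder_bernstein (A B : Type) : card_le A B -> card_le B A -> card_eq A B.
Proof.
  intros [f Hf] [g Hg]. exists (csb_fwd A B f g), (csb_bwd A B f g).
  split; intros; [apply csb_bwd_fwd | apply csb_fwd_bwd]; auto.
Qed.

Section StrictWellOrder.
Variables (U : Type) (lt : U -> U -> Prop).
Hypothesis Hwo : strict_well_order lt.

Lemma swo_irrefl x : ~ lt x x.
Proof. destruct Hwo as (H&_); auto. Qed.
Lemma swo_trans x y z : lt x y -> lt y z -> lt x z.
Proof. destruct Hwo as (_&H&_); eauto. Qed.
Lemma swo_total x y : lt x y \/ x = y \/ lt y x.
Proof. destruct Hwo as (_&_&H&_); auto. Qed.
Lemma swo_wf : well_founded lt.
Proof. destruct Hwo as (_&_&_&H); auto. Qed.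
End StrictWellOrder.

Lemma wf_least (U : Type) (lt : U -> U -> Prop) : well_founded lt ->
  forall P : U -> Prop, (exists x, P x) -> exists x, P x /\ forall y, P y -> ~ lt y x.
Proof.
  intros Hwf P [x Hx]. induction x as [x IH] using (well_founded_ind Hwf).
  destruct (classic (exists y, P y /\ lt y x)) as [[y [Hy Hyx]]|H].
  - exact (IH y Hyx Hy).
  - exists x; split; auto. intros y Hy Hl; apply H; eauto.
Qed.

Lemma swo_sub (U : Type) (lt : U -> U -> Prop) (P : U -> Prop) :
  strict_well_order lt -> strict_well_order (fun a b : sub P => lt (proj1_sig a) (proj1_sig b)).
Proof.
  intros (H1&H2&H3&H4). split; [|split; [|split]].
  - intros x; apply H1.
  - intros x y z; apply H2.
  - intros x y. destruct (H3 (proj1_sig x) (proj1_sig y)) as [?|[?|?]]; auto.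
    right; left; apply sub_eq; auto.
  - apply (wf_inverse_image _ _ lt (@proj1_sig U P)); auto.
Qed.

Lemma swo_nat : strict_well_order Peano.lt.
Proof. split; [|split; [|split]]; try (intros; lia). apply lt_wf. Qed.
(** Collapsing a subset [Y] of a well-ordered set [U] onto an initial segment:
    [collapse y] is the least element of [U] not already used by the elements of
    [Y] below [y].  It is strictly increasing, its image is downward closed, so a
    subset that is not equipotent to [U] is mapped below some bound [k]. *)
Section Collapse.
Variables (U : Type) (lt : U -> U -> Prop).
Hypothesis Hwo : strict_well_order lt.
Variable Y : U -> Prop.

Let ltY (a b : sub Y) : Prop := lt (proj1_sig a) (proj1_sig b).

Let ltY_wf : well_founded ltY.
Proof. apply (wf_inverse_image _ _ lt (@proj1_sig U Y)), (swo_wf _ _ Hwo). Qed.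

Definition collapse_step (y : sub Y) (rec : forall y', ltY y' y -> U) : U :=
  epsilon (inhabits (proj1_sig y))
    (fun s => (forall y' (H : ltY y' y), rec y' H <> s) /\
              forall s', (forall y' (H : ltY y' y), rec y' H <> s') -> ~ lt s' s).

Definition collapse : sub Y -> U := Fix ltY_wf (fun _ => U) collapse_step.

Lemma collapse_eq y : collapse y = collapse_step y (fun y' _ => collapse y').
Proof.
  apply (Fix_eq ltY_wf (fun _ => U) collapse_step). intros x f g Hfg.
  replace f with g; auto.
  apply functional_extensionality_dep; intro y'. apply functional_extensionality_dep; auto.
Qed.

Lemma collapse_spec y :
  (collapse y = proj1_sig y \/ lt (collapse y) (proj1_sig y)) /\
  (forall s, lt s (collapse y) -> exists y', ltY y' y /\ collapse y' = s) /\
  (forall y', ltY y' y -> collapse y' <> collapse y).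
Proof.
  induction y as [y IH] using (well_founded_ind ltY_wf).
  set (fresh := fun s => forall y' (H : ltY y' y), collapse y' <> s).
  assert (Hy_fresh : fresh (proj1_sig y)).
  { intros y' Hy' E. unfold ltY in Hy'.
    destruct (IH y' Hy') as [[E1|E1] _]; rewrite E in E1.
    - rewrite <- E1 in Hy'. eapply swo_irrefl; eauto.
    - eapply swo_irrefl, swo_trans; eauto. }
  destruct (wf_least U lt (swo_wf _ _ Hwo) fresh (ex_intro _ _ Hy_fresh)) as [m Hm].
  assert (Hleast : fresh (collapse y) /\ forall s', fresh s' -> ~ lt s' (collapse y)).
  { rewrite collapse_eq. unfold collapse_step.
    apply (epsilon_spec (inhabits (proj1_sig y))
      (fun s => fresh s /\ forall s', fresh s' -> ~ lt s' s)). eauto. }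
  destruct Hleast as [H1 H2]. split; [|split].
  - destruct (swo_total _ _ Hwo (collapse y) (proj1_sig y)) as [?|[?|Hgt]]; auto.
    exfalso; exact (H2 _ Hy_fresh Hgt).
  - intros s Hs. apply NNPP; intro H. apply (H2 s); auto.
    intros y' Hy' E; apply H; eauto.
  - intros y' Hy' E. eapply H1; eauto.
Qed.

Lemma collapse_mono y1 y2 : ltY y1 y2 -> lt (collapse y1) (collapse y2).
Proof.
  intros H. destruct (collapse_spec y2) as (_&_&C2).
  destruct (swo_total _ _ Hwo (collapse y1) (collapse y2)) as [?|[E|E]]; auto.
  - exfalso; eapply C2; eauto.
  - destruct (collapse_spec y1) as (_&B1&_). destruct (B1 _ E) as [y'' [Hl Ey]].
    exfalso. eapply C2; [|eauto]. unfold ltY in *. eapply swo_trans; eauto.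
Qed.

Lemma collapse_inj y1 y2 : collapse y1 = collapse y2 -> y1 = y2.
Proof.
  intros E. destruct (swo_total _ _ Hwo (proj1_sig y1) (proj1_sig y2)) as [H|[H|H]].
  - apply collapse_mono in H. rewrite E in H. exfalso; eapply swo_irrefl; eauto.
  - apply sub_eq; auto.
  - apply collapse_mono in H. rewrite E in H. exfalso; eapply swo_irrefl; eauto.
Qed.

Lemma small_embeds_below : ~ card_le U (sub Y) ->
  exists k (f : sub Y -> U), (forall a, lt (f a) k) /\ (forall a b, f a = f b -> a = b).
Proof.
  intros Hsmall. destruct (classic (exists k, forall y, collapse y <> k)) as [[k Hk]|H].
  - exists k, collapse. split; [|apply collapse_inj].
    intros a. destruct (swo_total _ _ Hwo (collapse a) k) as [?|[?|E]]; auto.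
    + exfalso; eapply Hk; eauto.
    + destruct (collapse_spec a) as (_&B&_). destruct (B _ E) as [y' [_ Ey]].
      exfalso; eapply Hk; eauto.
  - exfalso. apply Hsmall.
    assert (Hs : forall k, exists y, collapse y = k).
    { intros k; apply NNPP; intro H'; apply H; exists k; intros y E; apply H'; eauto. }
    destruct (choice _ Hs) as [inv Hinv]. exists inv.
    intros a1 a2 E. rewrite <- (Hinv a1), <- (Hinv a2), E. auto.
Qed.
End Collapse.

(** A well-order [V] without a largest element absorbs a factor [nat]:
    writing [t = succ^n b] with [b] a limit point, the map
    [(m, succ^n b) ↦ succ^(⟨m,n⟩) b] is injective. *)
Section AbsorbNat.
Variables (V : Type) (lt : V -> V -> Prop).
Hypothesis Hwo : strict_well_order lt.
Hypothesis Hnomax : forall t, exists u, lt t u.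

Lemma succ_ex t : exists u, lt t u /\ forall v, lt t v -> ~ lt v u.
Proof. apply (wf_least V lt (swo_wf _ _ Hwo) (fun u => lt t u)); auto. Qed.

Definition succ t : V := proj1_sig (constructive_indefinite_description _ (succ_ex t)).

Lemma succ_spec t : lt t (succ t) /\ forall v, lt t v -> ~ lt v (succ t).
Proof. exact (proj2_sig (constructive_indefinite_description _ (succ_ex t))). Qed.

Lemma succ_inj a b : succ a = succ b -> a = b.
Proof.
  intros E. destruct (swo_total _ _ Hwo a b) as [H|[H|H]]; auto; exfalso.
  - apply ((proj2 (succ_spec a)) b H). rewrite E. apply succ_spec.
  - apply ((proj2 (succ_spec b)) a H). rewrite <- E. apply succ_spec.
Qed.

Definition is_limit b := forall p, succ p <> b.

Lemma limit_decomposition t : exists bn : V * nat,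
  is_limit (fst bn) /\ t = Nat.iter (snd bn) succ (fst bn).
Proof.
  induction t as [t IH] using (well_founded_ind (swo_wf _ _ Hwo)).
  destruct (classic (is_limit t)) as [H|H].
  - exists (t, 0%nat); simpl; auto.
  - apply not_all_ex_not in H. destruct H as [p Hp]. apply NNPP in Hp.
    destruct (IH p) as [[b n] [Hb E]]. { rewrite <- Hp. apply succ_spec. }
    exists (b, S n); simpl in *. split; auto. rewrite <- E; auto.
Qed.

Lemma limit_decomposition_unique n : forall m b b', is_limit b -> is_limit b' ->
  Nat.iter n succ b = Nat.iter m succ b' -> n = m /\ b = b'.
Proof.
  induction n as [|n IH]; intros [|m] b b' Hb Hb' E; simpl in E.
  - auto.
  - exfalso. apply (Hb (Nat.iter m succ b')). auto.
  - exfalso. apply (Hb' (Nat.iter n succ b)). auto.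
  - apply succ_inj in E. destruct (IH m b b' Hb Hb' E). auto.
Qed.

Lemma nat_prod_absorbed : card_le (nat * V) V.
Proof.
  destruct (choice _ limit_decomposition) as [dec Hdec].
  exists (fun mt => Nat.iter (to_nat (fst mt, snd (dec (snd mt)))) succ (fst (dec (snd mt)))).
  intros [m1 t1] [m2 t2]; cbn [fst snd].
  destruct (Hdec t1) as [H1 E1], (Hdec t2) as [H2 E2].
  destruct (dec t1) as [b1 n1], (dec t2) as [b2 n2]. cbn [fst snd] in *.
  intros E. apply limit_decomposition_unique in E; auto. destruct E as [E Eb].
  apply (f_equal of_nat) in E. rewrite !cancel_of_to in E. inversion E. subst. auto.
Qed.
End AbsorbNat.

Lemma countable_union_card_le (A B : Type) (Y : nat -> A -> Prop) :
  (forall n, card_le (sub (Y n)) B) ->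
  card_le (sub (fun a => exists n, Y n a)) (nat * B).
Proof.
  intros HY.
  destruct (dep_choice nat (fun n => sub (Y n) -> B)
              (fun n f => forall a b, f a = f b -> a = b) HY) as [emb Hemb].
  assert (Hidx : forall e : sub (fun a => exists n, Y n a),
             exists y : {n : nat & sub (Y n)}, proj1_sig (projT2 y) = proj1_sig e).
  { intros [a [n Ha]]. exists (existT _ n (exist _ a Ha)). reflexivity. }
  destruct (choice _ Hidx) as [idx Hidx'].
  exists (fun e => (projT1 (idx e), emb (projT1 (idx e)) (projT2 (idx e)))).
  intros e1 e2 E. injection E as En Ey.
  pose proof (Hidx' e1) as H1. pose proof (Hidx' e2) as H2. revert En Ey H1 H2.
  destruct (idx e1) as [n1 y1], (idx e2) as [n2 y2]; simpl.
  intros -> Ey H1 H2. apply Hemb in Ey. subst. apply sub_eq. congruence.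
Qed.

Section UncountableCofinality.
Variables (K : Type) (lt : K -> K -> Prop).
Hypothesis Hio : initial_order lt.
Hypothesis Hcof : forall (A : Type) (ltA : A -> A -> Prop) (f : A -> K),
  strict_well_order ltA -> countable A ->
  (forall a b, ltA a b -> lt (f a) (f b)) ->
  ~ (forall k : K, exists a, k = f a \/ lt k (f a)).

Let Hwo : strict_well_order lt := proj1 Hio.

(** A one-point order is not cofinal. *)
Lemma cof_no_max t : exists u, lt t u.
Proof.
  apply NNPP; intros H.
  apply (Hcof unit (fun _ _ => False) (fun _ => t)).
  - split; [|split; [|split]]; auto.
    + intros [] []; auto.
    + intros a; constructor; intros y [].
  - exists (fun _ => 0%nat). intros [] [] _; auto.
  - intros _ _ [].
  - intros k. exists tt. destruct (swo_total _ _ Hwo k t) as [?|[?|?]]; auto.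
    exfalso; apply H; eauto.
Qed.

(** An increasing [omega]-sequence is not cofinal. *)
Lemma increasing_seq_bounded (kp : nat -> K) :
  (forall n, lt (kp n) (kp (S n))) -> exists k, forall n, lt (kp n) k.
Proof.
  intros Hinc.
  assert (Hmono : forall a b, (a < b)%nat -> lt (kp a) (kp b)).
  { intros a b Hab. induction Hab; auto. eapply swo_trans; eauto. }
  pose proof (Hcof nat Peano.lt kp swo_nat (card_le_refl nat) Hmono) as H.
  apply not_all_ex_not in H. destruct H as [k Hk]. exists k. intros n.
  destruct (swo_total _ _ Hwo (kp n) k) as [?|[E|E]]; auto; exfalso; apply Hk; eauto.
Qed.

Definition larger (a b : K) : K := if excluded_middle_informative (lt a b) then b else a.

Lemma larger_below a b c : lt (larger a b) c -> lt a c /\ lt b c.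
Proof.
  unfold larger. destruct (excluded_middle_informative (lt a b)) as [Hab|Hab]; intros H.
  - split; [eapply swo_trans|]; eauto.
  - split; auto. destruct (swo_total _ _ Hwo a b) as [?|[<-|?]];
      [contradiction | auto | eapply swo_trans; eauto].
Qed.

Lemma increasing_majorant (kn : nat -> K) : exists kp : nat -> K,
  (forall n, lt (kp n) (kp (S n))) /\ forall n, lt (kn n) (kp n).
Proof.
  destruct (choice _ cof_no_max) as [above Habove].
  set (kp := fix kp n := match n with
                         | O => above (kn O)
                         | S m => above (larger (kp m) (kn (S m))) end).
  exists kp. split; intros n.
  - apply (larger_below _ _ _ (Habove _)).
  - destruct n as [|n]; [apply Habove|]. apply (larger_below _ _ _ (Habove _)).
Qed.

(** Countably many sets smaller than [K] have a union smaller than [K]: each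
    embeds below some [k_n], the [k_n] are bounded by some [k], and the union
    injects into [nat] times a limit initial segment below [k]. *)
Lemma small_countable_union (Y : nat -> K -> Prop) :
  (forall n, ~ card_le K (sub (Y n))) -> ~ card_le K (sub (fun k => exists n, Y n k)).
Proof.
  intros Hsmall Hbig.
  assert (Hbelow : forall n, exists k, card_le (sub (Y n)) {j | lt j k}).
  { intros n. destruct (small_embeds_below K lt Hwo (Y n) (Hsmall n)) as (k & f & Hk & Hf).
    exists k, (fun y => exist _ (f y) (Hk y)).
    intros a b E. apply Hf. exact (f_equal (@proj1_sig _ _) E). }
  destruct (choice _ Hbelow) as [kn Hkn].
  destruct (increasing_majorant kn) as [kp [Hinc Hdom]].
  destruct (increasing_seq_bounded kp Hinc) as [k Hk].
  set (T := fun j => exists n, lt j (kp n)).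
  assert (HYT : forall n, card_le (sub (Y n)) (sub T)).
  { intros n. eapply card_le_trans; [apply Hkn|].
    exists (fun j => exist T (proj1_sig j) (ex_intro _ n (swo_trans _ _ Hwo _ _ _ (proj2_sig j) (Hdom n)))).
    intros a b E. apply sub_eq. exact (f_equal (@proj1_sig _ _) E). }
  assert (HT : card_le (nat * sub T) (sub T)).
  { apply (nat_prod_absorbed _ _ (swo_sub _ _ T Hwo)).
    intros [j [n Hj]]. exists (exist T (kp n) (ex_intro _ (S n) (Hinc n))). exact Hj. }
  assert (HTk : card_le (sub T) {j | lt j k}).
  { assert (Hbound : forall t : sub T, lt (proj1_sig t) k).
    { intros [j [n Hj]]. exact (swo_trans _ _ Hwo _ _ _ Hj (Hk n)). }
    exists (fun t => exist _ (proj1_sig t) (Hbound t)).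
    intros a b E. apply sub_eq. exact (f_equal (@proj1_sig _ _) E). }
  apply (proj2 Hio k). eapply card_le_trans; [exact Hbig|].
  eapply card_le_trans; [apply countable_union_card_le, HYT|].
  eapply card_le_trans; [exact HT | exact HTk].
Qed.
End UncountableCofinality.

Lemma common_threshold (T : Type) (good : T -> R -> Prop) (D : list T) :
  (forall t e e', 0 < e' <= e -> good t e -> good t e') ->
  (forall t, In t D -> exists e, 0 < e /\ good t e) ->
  exists e, 0 < e /\ forall t, In t D -> good t e.
Proof.
  intros Hmono. induction D as [|t0 D IH]; intros Hall.
  - exists 1. split; [lra | intros t []].
  - destruct IH as [e [He Hgood]]; [intros t Ht; apply Hall; right; auto|].
    destruct (Hall t0 (or_introl eq_refl)) as [e0 [He0 Hgood0]].
    exists (Rmin e e0). split; [apply Rmin_pos; auto|].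
    assert (Hle : Rmin e e0 <= e /\ Rmin e e0 <= e0) by (split; [apply Rmin_l | apply Rmin_r]).
    intros t [<-|Ht]; eapply Hmono; eauto; split; try apply Rmin_pos; tauto.
Qed.

Lemma net_mono (X : Type) (d : X -> X -> R) eps e W C :
  eps <= e -> is_net d eps W C -> is_net d e W C.
Proof. intros He H w Hw. destruct (H w Hw) as [c [Hc Hd]]. exists c; split; auto; lra. Qed.

Lemma inv_succ_small e : 0 < e -> exists n, / (INR n + 1) < e.
Proof.
  intros He. destruct (archimed_cor1 e He) as [N [HN HN0]]. exists N.
  apply Rle_lt_trans with (/ INR N); auto.
  apply Rinv_le_contravar; [apply lt_0_INR; auto | lra].
Qed.

Definition points {X : Type} {S : X -> Prop} (Y : sub S -> Prop) : X -> Prop :=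
  fun x => exists s, proj1_sig s = x /\ Y s.

Lemma points_card_le (X : Type) (S : X -> Prop) (Y : sub S -> Prop) :
  card_le (sub (points Y)) (sub Y).
Proof.
  assert (Hpre : forall x : sub (points Y), exists y : sub Y, proj1_sig (proj1_sig y) = proj1_sig x).
  { intros [x [s [<- Hs]]]. exists (exist _ s Hs). reflexivity. }
  destruct (choice _ Hpre) as [pre Hpre']. exists pre.
  intros a b E. apply sub_eq.
  etransitivity; [symmetry; exact (Hpre' a)|]. rewrite E. exact (Hpre' b).
Qed.

Section Metric.
Variables (X : Type) (tau : (X -> Prop) -> Prop) (d : X -> X -> R).
Hypothesis Hd : is_metric d.
Hypothesis Hi : induces d tau.

Lemma d_xx x : d x x = 0.  Proof. destruct Hd as (_&H&_); apply H; auto. Qed.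
Lemma d_sym x y : d x y = d y x.  Proof. destruct Hd as (_&_&H&_); auto. Qed.
Lemma d_tri x y z : d x z <= d x y + d y z.  Proof. destruct Hd as (_&_&_&H); auto. Qed.

Lemma ball_open x r : tau (fun y => d x y < r).
Proof.
  apply Hi. intros y Hy. exists (r - d x y). split; [lra|].
  intros z Hz. pose proof (d_tri x y z). lra.
Qed.

Lemma dense_near W S : dense_in tau W S -> forall w, W w -> forall r, 0 < r ->
  exists s, S s /\ d w s < r.
Proof.
  intros [_ H] w Hw r Hr. destruct (H _ (ball_open w r) w Hw) as [s [Hs Hs']]; eauto.
  rewrite d_xx; auto.
Qed.
End Metric.

(** Replacing the centres of a net by points of [S]: given a well-order [lt] of
    [S], the [r]-representative of a centre [c] is the [lt]-least point of [S]
    in the open [r]-ball around [c].  Distinct representatives have distinct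
    centres, and representatives of finer and finer nets form a dense set. *)
Section Representatives.
Variables (X : Type) (tau : (X -> Prop) -> Prop) (W S : X -> Prop) (d : X -> X -> R).
Hypothesis Hd : is_metric d.
Hypothesis Hi : induces d tau.
Hypothesis HdS : dense_in tau W S.
Variable lt : sub S -> sub S -> Prop.
Hypothesis Hwo : strict_well_order lt.

Definition representatives (C : X -> Prop) (r : R) : sub S -> Prop :=
  fun s => exists c, C c /\ d c (proj1_sig s) < r /\
                     forall s', d c (proj1_sig s') < r -> ~ lt s' s.

Lemma representatives_card_le C r : card_le (sub (representatives C r)) (sub C).
Proof.
  assert (Hc : forall y : sub (representatives C r), exists c : sub C,
             d (proj1_sig c) (proj1_sig (proj1_sig y)) < r /\
             forall s', d (proj1_sig c) (proj1_sig s') < r -> ~ lt s' (proj1_sig y)).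
  { intros [s [c [H1 [H2 H3]]]]. exists (exist _ c H1). simpl. auto. }
  destruct (choice _ Hc) as [centre Hcentre]. exists centre. intros y1 y2 E.
  destruct (Hcentre y1) as [A1 B1], (Hcentre y2) as [A2 B2]. rewrite E in A1, B1.
  apply sub_eq. destruct (swo_total _ _ Hwo (proj1_sig y1) (proj1_sig y2)) as [L|[L|L]]; auto.
  - exfalso; exact (B2 _ A1 L).
  - exfalso; exact (B1 _ A2 L).
Qed.

Lemma representative_near C r : 0 < r -> is_net d r W C ->
  forall w, W w -> exists s, representatives C (2 * r) s /\ d w (proj1_sig s) < 3 * r.
Proof.
  intros Hr HC w Hw. destruct (HC w Hw) as [c [Cc Dc]].
  destruct (dense_near X tau d Hd Hi W S HdS w Hw r Hr) as [s0 [Ss0 Ds0]].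
  assert (Hex : exists s : sub S, d c (proj1_sig s) < 2 * r).
  { exists (exist _ s0 Ss0); simpl. pose proof (d_tri X d Hd c w s0).
    rewrite (d_sym X d Hd c w) in H. lra. }
  destruct (wf_least _ lt (swo_wf _ _ Hwo) _ Hex) as [s [Hs Hsmin]].
  exists s. split; [exists c; auto|].
  pose proof (d_tri X d Hd w c (proj1_sig s)). lra.
Qed.

Lemma representatives_union_dense (Cn : nat -> X -> Prop) :
  (forall n, is_net d (/ (INR n + 1)) W (Cn n)) ->
  dense_in tau W (points (fun s => exists n, representatives (Cn n) (2 * / (INR n + 1)) s)).
Proof.
  intros HCn. split.
  - intros x [s [<- _]]. apply (proj1 HdS), (proj2_sig s).
  - intros U HU w Hw Uw. destruct (proj1 (Hi U) HU w Uw) as [e [He HeU]].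
    destruct (inv_succ_small (e / 3)) as [n Hn]; [lra|].
    assert (Hr : 0 < / (INR n + 1)) by (apply Rinv_0_lt_compat; pose proof (pos_INR n); lra).
    destruct (representative_near (Cn n) _ Hr (HCn n) w Hw) as [s [Hs Ds]].
    exists (proj1_sig s). split; [exists s; eauto | apply HeU; lra].
Qed.
End Representatives.

(** For a single compatible metric, sufficiently fine nets of [W] are at least
    as large as a minimal dense subset [S], provided [|S|] has uncountable
    cofinality: otherwise the representatives of small nets of radii [1/(n+1)]
    would form a dense set that is a countable union of sets smaller than [S]. *)
Lemma net_lower_bound (X : Type) (tau : (X -> Prop) -> Prop) (W S : X -> Prop)
  (d : X -> X -> R) :
  is_metric d -> induces d tau -> min_card (dense_in tau W) S ->
  uncountable_cofinality (sub S) ->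
  exists e0, 0 < e0 /\ forall C, is_net d e0 W C -> card_le (sub S) (sub C).
Proof.
  intros Hd Hi [HdS Hmin] [lt [Hio Hcof]]. apply NNPP; intros Hno.
  assert (Hsmall_nets : forall n, exists C,
             is_net d (/ (INR n + 1)) W C /\ ~ card_le (sub S) (sub C)).
  { intros n. apply NNPP; intro H. apply Hno. exists (/ (INR n + 1)).
    split; [apply Rinv_0_lt_compat; pose proof (pos_INR n); lra|].
    intros C HC. apply NNPP; eauto. }
  destruct (choice _ Hsmall_nets) as [Cn HCn].
  apply (small_countable_union (sub S) lt Hio Hcof
           (fun n => representatives X S d lt (Cn n) (2 * / (INR n + 1)))).
  - intros n HY. apply (proj2 (HCn n)).
    eapply card_le_trans; [exact HY | apply representatives_card_le, (proj1 Hio)].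
  - eapply card_le_trans; [apply Hmin | apply points_card_le].
    apply representatives_union_dense; auto; [apply Hio | intros n; apply HCn].
Qed.

Section Capacities.
Variables (X : Type) (tau : (X -> Prop) -> Prop) (W S : X -> Prop) (d : X -> X -> R).
Hypothesis Hd : is_metric d.
Hypothesis Hi : induces d tau.
Hypothesis HdS : dense_in tau W S.
Variable eps : R.
Hypothesis Heps : 0 < eps.

(** Points of an [eps]-distinguishable set have pairwise distinct
    [eps/2]-close points of [S]. *)
Lemma distinguishable_card_le A :
  Defs.incl A W -> distinguishable d eps A -> card_le (sub A) (sub S).
Proof.
  intros HA HdA.
  assert (Hnear : forall a : sub A, exists s : sub S, d (proj1_sig a) (proj1_sig s) < eps / 2).
  { intros [a Ha]. destruct (dense_near X tau d Hd Hi W S HdS a (HA a Ha) (eps / 2))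
      as [s [Hs Ds]]; [lra|]. exists (exist _ s Hs); auto. }
  destruct (choice _ Hnear) as [g Hg]. exists g. intros a1 a2 E. apply sub_eq.
  apply NNPP; intro Hn. pose proof (HdA _ _ (proj2_sig a1) (proj2_sig a2) Hn).
  pose proof (Hg a1) as H1. pose proof (Hg a2) as H2. rewrite E in H1.
  pose proof (d_tri X d Hd (proj1_sig a1) (proj1_sig (g a2)) (proj1_sig a2)).
  rewrite (d_sym X d Hd (proj1_sig (g a2)) (proj1_sig a2)) in *. lra.
Qed.

Lemma dense_is_net : is_net d eps W S.
Proof.
  intros w Hw. destruct (dense_near X tau d Hd Hi W S HdS w Hw eps Heps) as [s [Hs Ds]].
  exists s; split; auto; lra.
Qed.

(** A maximal [eps]-distinguishable subset of [W] is an [eps]-net of [W]: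
    a point farther than [eps] from it could be added. *)
Lemma maximal_distinguishable_is_net A :
  maximal_distinguishable d eps W A -> is_net d eps W A.
Proof.
  intros [HA [HdA Hmax]] w Hw. apply NNPP; intro Hn.
  assert (Hw' : A w).
  { apply (Hmax (fun x => A x \/ x = w)).
    - intros x [Hx| ->]; auto.
    - intros x y [Hx| ->] [Hy| ->] Hxy.
      + auto.
      + apply Rnot_le_lt. intro Hl. apply Hn. exists x. rewrite d_sym; auto.
      + apply Rnot_le_lt. intro Hl. apply Hn. exists y. auto.
      + congruence.
    - intros x Hx; auto.
    - auto. }
  apply Hn. exists w. split; [exact Hw'|]. rewrite (d_xx X d Hd). lra.
Qed.

(** Greedy transfinite selection along a well-order of [S]: a point is kept
    iff it is [eps]-far from every earlier kept point. *)
Variable lt : sub S -> sub S -> Prop.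
Hypothesis Hwo : strict_well_order lt.

Definition greedy_step (s : sub S) (rec : forall t, lt t s -> bool) : bool :=
  if excluded_middle_informative
       (forall t (H : lt t s), rec t H = true -> eps < d (proj1_sig s) (proj1_sig t))
  then true else false.

Definition greedy : sub S -> bool := Fix (swo_wf _ _ Hwo) (fun _ => bool) greedy_step.

Lemma greedy_spec s : greedy s = true <->
  forall t, lt t s -> greedy t = true -> eps < d (proj1_sig s) (proj1_sig t).
Proof.
  unfold greedy. rewrite Fix_eq.
  - unfold greedy_step. destruct (excluded_middle_informative _); split; auto; discriminate.
  - intros x f g Hfg. replace f with g; auto.
    apply functional_extensionality_dep; intro t. apply functional_extensionality_dep; auto.
Qed.

Definition greedy_set (x : X) : Prop := exists s : sub S, proj1_sig s = x /\ greedy s = true.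

Lemma greedy_set_incl : Defs.incl greedy_set W.
Proof. intros x [s [<- _]]. apply (proj1 HdS), (proj2_sig s). Qed.

Lemma greedy_set_distinguishable : distinguishable d eps greedy_set.
Proof.
  intros x y [s [<- Hs]] [t [<- Ht]] Hn.
  destruct (swo_total _ _ Hwo s t) as [L|[L|L]].
  - rewrite (d_sym X d Hd). apply (proj1 (greedy_spec t)); auto.
  - subst; congruence.
  - apply (proj1 (greedy_spec s)); auto.
Qed.

Lemma greedy_set_net : is_net d (2 * eps) W greedy_set.
Proof.
  intros w Hw. destruct (dense_near X tau d Hd Hi W S HdS w Hw eps Heps) as [s0 [Hs0 Ds]].
  set (s := exist S s0 Hs0).
  destruct (classic (greedy s = true)) as [H|H].
  - exists s0. split; [exists s; auto | lra].
  - rewrite greedy_spec in H. apply not_all_ex_not in H. destruct H as [t Ht].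
    apply imply_to_and in Ht. destruct Ht as [Lt Ht].
    apply imply_to_and in Ht. destruct Ht as [Gt Ht]. apply Rnot_lt_le in Ht.
    exists (proj1_sig t). split; [exists t; auto|].
    pose proof (d_tri X d Hd w s0 (proj1_sig t)). simpl in Ht. lra.
Qed.

Hypothesis Hlb : forall C, is_net d (2 * eps) W C -> card_le (sub S) (sub C).

Lemma NhatA_card_eq A C : Defs.incl W A -> is_NhatA d eps A W C -> card_eq (sub C) (sub S).
Proof.
  intros HA [[HCA HC] Hmin]. apply schroeder_bernstein.
  - apply Hmin. split; [intros x Hx; apply HA, (proj1 HdS), Hx | exact dense_is_net].
  - apply Hlb. eapply net_mono; [|exact HC]. lra.
Qed.

Lemma Mhat_card_eq A : is_Mhat d eps W A -> card_eq (sub A) (sub S).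
Proof.
  intros [HA _]. apply schroeder_bernstein.
  - apply distinguishable_card_le; apply HA.
  - apply Hlb. eapply net_mono; [|apply maximal_distinguishable_is_net, HA]. lra.
Qed.

Lemma Mstar_card_eq (K : Type) : is_Mstar d eps W K -> card_eq K (sub S).
Proof.
  intros [Hup Hleast]. apply schroeder_bernstein.
  - apply Hleast. exact distinguishable_card_le.
  - eapply card_le_trans; [apply Hlb, greedy_set_net|].
    apply Hup; [exact greedy_set_incl | exact greedy_set_distinguishable].
Qed.
Lemma capacities_card_eq :
  (forall A C, Defs.incl W A -> is_NhatA d eps A W C -> card_eq (sub C) (sub S)) /\
  (forall A, is_Mhat d eps W A -> card_eq (sub A) (sub S)) /\
  (forall K : Type, is_Mstar d eps W K -> card_eq K (sub S)).
Proof. split; [|split]; [exact NhatA_card_eq | exact Mhat_card_eq | exact Mstar_card_eq]. Qed.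
End Capacities.

(** Corollary 2.12.  Choose [e0] below which nets are at least [den W] large for
    every metric of [D]; for [eps < e0/2] all four capacities of [W] equal
    [den W] whichever metric of [D] is used. *)
Theorem corollary2p12 (X : Type) (tau : (X -> Prop) -> Prop) (W : X -> Prop)
  (D : list (X -> X -> R))
  (Htau : metrizable tau)
  (Hden : exists S, min_card (dense_in tau W) S /\ uncountable_cofinality (sub S))
  (HD : forall d, In d D -> is_metric d /\ induces d tau) :
  exists eps0, 0 < eps0 /\
    forall eps, 0 < eps < eps0 ->
    forall d1 d2, In d1 D -> In d2 D ->
      (* Nhat_eps(W) = Nhat^W_eps(W) *)
      (forall C1 C2, is_NhatA d1 eps W W C1 -> is_NhatA d2 eps W W C2 ->
         card_eq (sub C1) (sub C2)) /\
      (* Nhat^X_eps(W) *)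
      (forall C1 C2, is_NhatA d1 eps (fun _ => True) W C1 ->
         is_NhatA d2 eps (fun _ => True) W C2 -> card_eq (sub C1) (sub C2)) /\
      (* Mhat_eps(W) *)
      (forall A1 A2, is_Mhat d1 eps W A1 -> is_Mhat d2 eps W A2 ->
         card_eq (sub A1) (sub A2)) /\
      (* M^*_eps(W) *)
      (forall K1 K2 : Type, is_Mstar d1 eps W K1 -> is_Mstar d2 eps W K2 ->
         card_eq K1 K2).
Proof.
  destruct Hden as [S [HminS Hcof]].
  destruct (common_threshold _
              (fun d e => forall C, is_net d e W C -> card_le (sub S) (sub C)) D)
    as [e [He Hlb]].
  { intros d e e' He' Hgood C HC. apply Hgood. eapply net_mono; [|exact HC]. lra. }
  { intros d Hd. destruct (HD d Hd). apply (net_lower_bound X tau); auto. }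
  exists (e / 2). split; [lra|]. intros eps [Heps Heps2] d1 d2 H1 H2.
  destruct Hcof as [lt [[Hwo _] _]].
  assert (Hlb2 : forall d, In d D -> forall C, is_net d (2 * eps) W C -> card_le (sub S) (sub C)).
  { intros d Hd C HC. apply (Hlb d Hd). eapply net_mono; [|exact HC]. lra. }
  destruct HminS as [HdS _], (HD d1 H1) as [Hm1 Hi1], (HD d2 H2) as [Hm2 Hi2].
  destruct (capacities_card_eq X tau W S d1 Hm1 Hi1 HdS eps Heps lt Hwo (Hlb2 d1 H1))
    as (N1 & M1 & S1).
  destruct (capacities_card_eq X tau W S d2 Hm2 Hi2 HdS eps Heps lt Hwo (Hlb2 d2 H2))
    as (N2 & M2 & S2).
  repeat split; intros P Q HP HQ; apply (card_eq_through _ _ (sub S)).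
  - exact (N1 W P (fun x Hx => Hx) HP).
  - exact (N2 W Q (fun x Hx => Hx) HQ).
  - exact (N1 _ P (fun x _ => I) HP).
  - exact (N2 _ Q (fun x _ => I) HQ).
  - exact (M1 P HP).
  - exact (M2 Q HQ).
  - exact (S1 P HP).
  - exact (S2 Q HQ).
Qed.
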